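(* Let $A\subseteq\mathbf R^{n+1}$ be closed, $x,y\in\partial A$, and $0<r<s/2$. Suppose $u,v\in\mathbf S^n$ satisfy $$B(x-ru,r)\subseteq A,\quad U(x+su,s)\cap A=\varnothing,\quad B(y-rv,r)\subseteq A,\quad U(y+sv,s)\cap A=\varnothing.$$ Then $$|u-v|\le\max\Big\{\frac{2(s-2r)}{r(s-r)},\sqrt{\frac{2}{r(s-r)}}\Big\}\,|x-y|.$$
   Context: $\mathbf R^{n+1}$ carries the Euclidean norm $|\cdot|$; $\mathbf S^n$ is the Euclidean unit sphere; $B(z,t)$ and $U(z,t)$ denote the closed and open Euclidean balls of center $z$ and radius $t$. *)

(* R^{n+1} is modelled as row vectors 'rV[R]_(n.+1). *)
From HB Require Import structures.
From mathcomp Require Import all_boot all_order all_algebra.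
From mathcomp Require Import all_classical all_reals all_analysis.
Set Implicit Arguments. Unset Strict Implicit. Unset Printing Implicit Defensive.
Import Order.TTheory GRing.Theory Num.Theory.
Import numFieldTopology.Exports numFieldNormedType.Exports.
Local Open Scope ring_scope.
Local Open Scope classical_set_scope.

Section Euclid.
Variables (R : realType) (k : nat).
Definition edot (a b : 'rV[R]_k) : R := \sum_(i < k) a 0 i * b 0 i.
Definition enorm (a : 'rV[R]_k) : R := Num.sqrt (edot a a).
Definition cball (z : 'rV[R]_k) (t : R) : set 'rV[R]_k := [set w | enorm (w - z) <= t].
Definition oball (z : 'rV[R]_k) (t : R) : set 'rV[R]_k := [set w | enorm (w - z) < t].
Definition usphere : set 'rV[R]_k := [set w | enorm w = 1].
(* topological boundary (the library topology on 'rV is the product topology,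
   which coincides with the Euclidean one) *)
Definition bdry (A : set 'rV[R]_k) : set 'rV[R]_k := closure A `\` interior A.
End Euclid.

(** The inner ball at [x] and the outer ball at [y] are disjoint, so their
    centres are at distance at least [r + s]; likewise with [x] and [y]
    exchanged.  These two centre differences [a] and [b] satisfy
    [a - b = 2 (x - y) + (s - r) (u - v)] and [a + b = -(r + s) (u + v)], and
    [|u + v|^2 = 4 - |u - v|^2] for unit vectors.  The parallelogram law thus
    gives [(r + s) |u - v| <= |a - b| <= 2 |x - y| + (s - r) |u - v|], i.e.
    [r |u - v| <= |x - y|].  Finally [r^-1] never exceeds the constant of the
    statement. *)

From HB Require Import structures.
From mathcomp Require Import all_boot all_order all_algebra.
From mathcomp Require Import all_classical all_reals all_analysis.
From mathcomp Require Import ring lra.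

Set Implicit Arguments.
Unset Strict Implicit.
Unset Printing Implicit Defensive.
Import Order.TTheory GRing.Theory Num.Theory.
Import numFieldTopology.Exports numFieldNormedType.Exports.
Local Open Scope ring_scope.
Local Open Scope classical_set_scope.

Section EuclideanSpace.
Variables (R : realType) (k : nat).
Implicit Types (a b c : 'rV[R]_k) (t : R).

Lemma edotC a b : edot a b = edot b a.
Proof. by apply: eq_bigr => i _; rewrite mulrC. Qed.

Lemma edotDl a b c : edot (a + b) c = edot a c + edot b c.
Proof. by rewrite /edot -big_split; apply: eq_bigr => i _; rewrite mxE mulrDl. Qed.

Lemma edotDr a b c : edot a (b + c) = edot a b + edot a c.
Proof. by rewrite edotC edotDl !(edotC a). Qed.

Lemma edotZl t a b : edot (t *: a) b = t * edot a b.
Proof. by rewrite /edot mulr_sumr; apply: eq_bigr => i _; rewrite mxE mulrA. Qed.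

Lemma edotZr t a b : edot a (t *: b) = t * edot a b.
Proof. by rewrite edotC edotZl edotC. Qed.

Lemma edotNl a b : edot (- a) b = - edot a b.
Proof. by rewrite -scaleN1r edotZl mulN1r. Qed.

Lemma edotNr a b : edot a (- b) = - edot a b.
Proof. by rewrite edotC edotNl edotC. Qed.

Lemma edot0l b : edot 0 b = 0.
Proof. by rewrite -(scale0r 0) edotZl mul0r. Qed.

Lemma edot_ge0 a : 0 <= edot a a.
Proof. by apply: sumr_ge0 => i _; rewrite -expr2 sqr_ge0. Qed.

Lemma edot_eq0 a : (edot a a == 0) = (a == 0).
Proof.
apply/eqP/eqP => [a0|->]; last exact: edot0l.
apply/rowP => j; rewrite mxE; apply/eqP; rewrite -sqrf_eq0 expr2; apply/eqP.
by apply: (psumr_eq0P _ a0) => // i _; rewrite -expr2 sqr_ge0.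
Qed.

Lemma enorm_ge0 a : 0 <= enorm a.
Proof. exact: sqrtr_ge0. Qed.

Lemma sqr_enorm a : enorm a ^+ 2 = edot a a.
Proof. by rewrite sqr_sqrtr // edot_ge0. Qed.

Lemma enorm_eq0 a : (enorm a == 0) = (a == 0).
Proof. by rewrite -sqrf_eq0 sqr_enorm edot_eq0. Qed.

Lemma enormZ t a : enorm (t *: a) = `|t| * enorm a.
Proof. by rewrite /enorm edotZl edotZr mulrA -expr2 sqrtrM ?sqr_ge0 // sqrtr_sqr. Qed.

Lemma enormN a : enorm (- a) = enorm a.
Proof. by rewrite -scaleN1r enormZ normrN1 mul1r. Qed.

Lemma enormB a b : enorm (a - b) = enorm (b - a).
Proof. by rewrite -opprB enormN. Qed.

Lemma edot_le_enorm a b : edot a b <= enorm a * enorm b.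
Proof.
have [ab0|ab_neq0] := eqVneq (enorm a * enorm b) 0.
  rewrite ab0; move/eqP: ab0; rewrite mulf_eq0 !enorm_eq0 => /orP[]/eqP->.
    by rewrite edot0l.
  by rewrite edotC edot0l.
have key : 0 <= 2 * (enorm a * enorm b) * (enorm a * enorm b - edot a b).
  have := edot_ge0 (enorm b *: a - enorm a *: b).
  rewrite !(edotDl, edotDr, edotNl, edotNr, edotZl, edotZr) [edot b a]edotC.
  by rewrite -!sqr_enorm; congr (0 <= _); ring.
have ab_gt0 : 0 < 2 * (enorm a * enorm b).
  by rewrite mulr_gt0 // lt0r ab_neq0 mulr_ge0 ?enorm_ge0.
by rewrite -subr_ge0 -(pmulr_rge0 _ ab_gt0).
Qed.

Lemma enormD a b : enorm (a + b) <= enorm a + enorm b.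
Proof.
rewrite -(ler_pXn2r (_ : 0 < 2)%N) ?nnegrE ?addr_ge0 ?enorm_ge0 //.
rewrite sqr_enorm edotDl !edotDr [edot b a]edotC -!sqr_enorm.
have := edot_le_enorm a b; lra.
Qed.

Lemma enorm_parallelogram a b :
  enorm (a + b) ^+ 2 + enorm (a - b) ^+ 2 = 2 * (enorm a ^+ 2 + enorm b ^+ 2).
Proof.
rewrite !sqr_enorm !(edotDl, edotDr, edotNl, edotNr) [edot b a]edotC; ring.
Qed.

Lemma cball_oball_meet a b r s : 0 <= r -> 0 < s -> enorm (a - b) < r + s ->
  exists w, cball a r w /\ oball b s w.
Proof.
move=> r_ge0 s_gt0 ab_lt; have rs_gt0 : 0 < r + s by rewrite ltr_wpDl.
pose t := r / (r + s); have t_ge0 : 0 <= t := divr_ge0 r_ge0 (ltW rs_gt0).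
have Ct : 1 - t = s / (r + s) by rewrite /t; field; rewrite lt0r_neq0.
exists (a + t *: (b - a)); split; rewrite /cball /oball /=.
  rewrite addrAC subrr add0r enormZ ger0_norm // enormB.
  by rewrite /t mulrAC ler_pdivrMr // ler_wpM2l // ltW.
have -> : a + t *: (b - a) - b = (1 - t) *: (a - b).
  by apply/rowP => i; rewrite !mxE; ring.
by rewrite enormZ Ct ger0_norm ?divr_ge0 ?ltW // mulrAC ltr_pdivrMr // ltr_pM2l.
Qed.

Lemma separated_balls_enorm_ge (A : set 'rV[R]_k) a b r s : 0 <= r -> 0 < s ->
  cball a r `<=` A -> oball b s `&` A = set0 -> r + s <= enorm (a - b).
Proof.
move=> r_ge0 s_gt0 inA outA; rewrite leNgt; apply/negP => /(cball_oball_meet r_ge0 s_gt0).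
by case=> w [/inA wA wb]; have : (oball b s `&` A) w by []; rewrite outA.
Qed.

Lemma unit_normals_enorm_le (x y u v : 'rV[R]_k) (r s : R) :
  enorm u = 1 -> enorm v = 1 -> 0 <= r <= s ->
  r + s <= enorm (x - r *: u - (y + s *: v)) ->
  r + s <= enorm (y - r *: v - (x + s *: u)) ->
  r * enorm (u - v) <= enorm (x - y).
Proof.
move=> u1 v1 /andP[r_ge0 r_le_s] sep_a sep_b.
have rs_ge0 : 0 <= r + s by rewrite addr_ge0 // (le_trans r_ge0).
set a := x - r *: u - (y + s *: v) in sep_a; set b := y - r *: v - (x + s *: u) in sep_b.
have a_sub_b : a - b = 2 *: (x - y) + (s - r) *: (u - v).
  by apply/rowP => i; rewrite !mxE; ring.
have a_add_b : a + b = (- (r + s)) *: (u + v).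
  by apply/rowP => i; rewrite !mxE; ring.
have uv : enorm (u + v) ^+ 2 = 4 - enorm (u - v) ^+ 2.
  by have := enorm_parallelogram u v; rewrite u1 v1; lra.
have sq_sep (c : 'rV[R]_k) : r + s <= enorm c -> (r + s) ^+ 2 <= enorm c ^+ 2.
  by move=> ?; rewrite ler_pXn2r ?nnegrE ?enorm_ge0.
have lower : (r + s) * enorm (u - v) <= enorm (a - b).
  rewrite -(ler_pXn2r (_ : 0 < 2)%N) ?nnegrE ?mulr_ge0 ?enorm_ge0 // exprMn.
  have := enorm_parallelogram a b; rewrite a_add_b enormZ normrN ger0_norm //.
  rewrite exprMn uv; have := sq_sep _ sep_a; have := sq_sep _ sep_b; nra.
have upper : enorm (a - b) <= 2 * enorm (x - y) + (s - r) * enorm (u - v).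
  rewrite a_sub_b; apply: le_trans (enormD _ _) _.
  by rewrite !enormZ !ger0_norm ?subr_ge0.
nra.
Qed.

End EuclideanSpace.

Lemma invr_le_max_bound (R : rcfType) (r s : R) : 0 < r -> 2 * r < s ->
  r^-1 <= Num.max (2 * (s - 2 * r) / (r * (s - r))) (Num.sqrt (2 / (r * (s - r)))).
Proof.
move=> r_gt0 rs; have rsr_gt0 : 0 < r * (s - r) by rewrite mulr_gt0 // subr_gt0; lra.
(* Both branches of the maximum equal [r^-1] at [s = 3 r]. *)
rewrite le_max; apply/orP; case: (lerP (3 * r) s) => s3; [left | right].
  by rewrite ler_pdivlMr // mulrA mulVf ?gt_eqF // mul1r; lra.
have r_ge0 := ltW r_gt0; have rsr_ge0 := ltW rsr_gt0.
rewrite -[r^-1]ger0_norm ?invr_ge0 // -sqrtr_sqr ler_sqrt ?divr_ge0 //.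
rewrite ler_pdivlMr //; have -> : r^-1 ^+ 2 * (r * (s - r)) = (s - r) / r.
  by field; rewrite lt0r_neq0.
by rewrite ler_pdivrMr //; lra.
Qed.

Theorem lemma2p12 (R : realType) (n : nat) (A : set 'rV[R]_n.+1)
    (x y u v : 'rV[R]_n.+1) (r s : R) :
  closed A -> bdry A x -> bdry A y ->
  0 < r -> r < s / 2 ->
  usphere u -> usphere v ->
  cball (x - r *: u) r `<=` A -> oball (x + s *: u) s `&` A = set0 ->
  cball (y - r *: v) r `<=` A -> oball (y + s *: v) s `&` A = set0 ->
  enorm (u - v) <=
    Num.max (2 * (s - 2 * r) / (r * (s - r))) (Num.sqrt (2 / (r * (s - r))))
      * enorm (x - y).
Proof.
move=> _ _ _ r_gt0 rs u1 v1 inx outx iny outy.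
have {rs} rs : 2 * r < s by rewrite -ltr_pdivlMl // mulrC.
have s_gt0 : 0 < s by lra.
have sep_xy := separated_balls_enorm_ge (ltW r_gt0) s_gt0 inx outy.
have sep_yx := separated_balls_enorm_ge (ltW r_gt0) s_gt0 iny outx.
have r_le_s : 0 <= r <= s by apply/andP; split; lra.
have := unit_normals_enorm_le u1 v1 r_le_s sep_xy sep_yx.
rewrite -ler_pdivlMl // => uv_le.
apply: le_trans uv_le _; rewrite ler_wpM2r ?enorm_ge0 //.
exact: invr_le_max_bound.
Qed.
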